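(* Let $\sigma>0$, $r\in\mathbb{R}$, $A>0$ and $B>0$, and consider the system of ODEs \[ \dot{x}_d = X,\quad \dot{X}=\sigma\big(Y-X+A\sin(Bx_d)\big),\quad \dot{Y}=-XZ+rX-Y,\quad \dot{Z}=XY-Z . \] For every integer $k$, the point $(x_d,X,Y,Z)=(k\pi/B,0,0,0)$ is an equilibrium. If $k$ is even, the Jacobian matrix of the system at this equilibrium has a real positive eigenvalue, so this equilibrium is linearly unstable for all values of $\sigma>0$, $r$, $A>0$, $B>0$.
   Context: The system models a one-dimensional wave-particle entity (a walking droplet) in the sinusoidal potential $U(x)=(A/B)\cos(Bx)$: $x_d$ is the particle position, $X$ its velocity, and $Y,Z$ are wave-memory variables. The equilibria with even $k$ correspond to the particle sitting at the maxima of the potential. *)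

From HB Require Import structures.
From mathcomp Require Import all_boot all_order all_algebra.
From mathcomp Require Import all_classical all_reals all_analysis.
Set Implicit Arguments. Unset Strict Implicit. Unset Printing Implicit Defensive.
Import Order.TTheory GRing.Theory Num.Theory.
Local Open Scope ring_scope.

Definition vf (R : realType) (sigma r A B : R) (u : 'rV[R]_4) : 'rV[R]_4 :=
  let xd := u ord0 (inord 0) in
  let X  := u ord0 (inord 1) in
  let Y  := u ord0 (inord 2) in
  let Z  := u ord0 (inord 3) in
  \row_(i < 4)
    match val i with
    | 0 => X
    | 1 => sigma * (Y - X + A * sin (B * xd))
    | 2 => - (X * Z) + r * X - Y
    | _ => X * Y - Z
    end.

(* The Jacobian used in the statement is MathComp-Analysis' derive.jacobian
   (jacobian f p := lin1_mx ('d f p)). *)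

Definition eqpt (R : realType) (B : R) (k : int) : 'rV[R]_4 :=
  \row_(i < 4) (if val i == 0%N then k%:~R * pi / B else 0).

(* At (k pi / B, 0, 0, 0) with k even, cos (B x_d) = 1, so the Z direction
   decouples from the Jacobian (eigenvalue -1) and the (x_d, X, Y) block has
   characteristic polynomial
     l^3 + (1 + sigma) l^2 + sigma (1 - r - A B) l - sigma A B.
   This cubic is monic and negative at 0, hence has a root l > 0, with
   eigenvector (1, l, r l / (l + 1), 0). *)

From HB Require Import structures.
From mathcomp Require Import all_boot all_order all_algebra.
From mathcomp Require Import all_classical all_reals all_analysis.
From mathcomp Require Import polyrcf ring.
Import Order.TTheory GRing.Theory Num.Theory.
Import numFieldNormedType.Exports.
Local Open Scope ring_scope.

Section RowDifferential.
Variable R : numFieldType.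

Global Instance is_diff_coord m n (i : 'I_m) (j : 'I_n) (p : 'M[R]_(m, n)) :
  is_diff p (fun u => u i j) (fun u => u i j).
Proof.
have coord_linear : linear (fun u : 'M[R]_(m, n) => u i j).
  by move=> a u v; rewrite !mxE.
pose f : {linear 'M[R]_(m, n) -> R} := HB.pack (fun u : 'M[R]_(m, n) => u i j)
  (GRing.isLinear.Build _ _ _ _ _ coord_linear).
have f_cont : continuous f := @coord_continuous R m n i j.
change (is_diff p f f).
by apply: DiffDef; [exact: linear_differentiable | exact: diff_lin].
Qed.

Lemma is_diff_derive1 (W : normedModType R) (f : R -> W) (x : R) (d : W) :
  is_derive x 1 f d -> is_diff x f ( *:%R^~ d).
Proof.
move=> fd; have f_derivable : derivable f x 1 by apply: ex_derive.
apply: DiffDef; first exact/derivable1_diffP.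
by rewrite diff1E ?derive1E ?derive_val //; exact/derivable1_diffP.
Qed.

Lemma is_diff_row (V : normedModType R) n (f df : V -> 'rV[R]_n) (p : V) :
  (forall i, is_diff p (fun u => f u ord0 i) (fun v => df v ord0 i)) ->
  is_diff p f df.
Proof.
move=> fi_diff.
have rowE (g : V -> 'rV[R]_n) : g = \sum_(i < n) (fun u => g u ord0 i *: 'e_i).
  by rewrite fct_sumE; apply/funext => u; exact: row_sum_delta.
rewrite (rowE f) (rowE df); apply: big_ind2 => i _.
exact: is_diff_comp (fi_diff i) (is_diff_scalel _ _).
Qed.

End RowDifferential.

Global Instance is_diff_sin (R : realType) (x : R) : is_diff x sin ( *:%R^~ (cos x)).
Proof. exact: is_diff_derive1. Qed.

Lemma sin_intpi (R : realType) (k : int) : sin (k%:~R * pi) = 0 :> R.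
Proof.
have sin_natpi (n : nat) : sin (n%:R * pi) = 0 :> R.
  by rewrite mulr_natl -[_ *+ n]add0r (alternatingn (@sinDpi R)) sin0 mulr0.
by case: k => n; rewrite ?NegzE ?intrN ?mulNr ?sinN -pmulrn sin_natpi ?oppr0.
Qed.

Lemma cos_evenpi (R : realType) (k : int) : (2 %| k)%Z -> cos (k%:~R * pi) = 1 :> R.
Proof.
have cos_nat2pi (n : nat) : cos (n%:R * (pi *+ 2)) = 1 :> R.
  by rewrite mulr_natl -[_ *+ n]add0r (periodicn (@cosD2pi R)) cos0.
move=> /divzK <-; rewrite intrM -mulrA mulr_natl.
by case: (k %/ 2)%Z => n; rewrite ?NegzE ?intrN ?mulNr ?cosN -pmulrn cos_nat2pi.
Qed.

Lemma poly_pos_root (R : rcfType) (p : {poly R}) :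
  0 < lead_coef p -> p.[0] < 0 -> exists2 x, 0 < x & root p x.
Proof.
move=> lc_gt0 p0_lt0; have [n pn_ge] := poly_pinfty_gt_lc lc_gt0.
pose b := Num.max n 0.
have b_ge0 : 0 <= b by rewrite le_max lexx orbT.
have pb_ge0 : 0 <= p.[b].
  by apply/(le_trans (ltW lc_gt0))/pn_ge; rewrite le_max lexx.
have sign_change : p.[0] <= 0 <= p.[b] by rewrite (ltW p0_lt0) pb_ge0.
have [x /andP[x_ge0 _] px0] := @poly_ivt R p 0 b b_ge0 sign_change.
exists x => //; rewrite lt_neqAle x_ge0 andbT; apply: contraTneq px0 => <-.
by rewrite /root lt_eqF.
Qed.

Section WalkingDroplet.
Context {R : realType}.
Variables sigma r A B : R.

Local Notation x i := (fun u : 'rV[R]_4 => u ord0 (inord i)).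

Definition dvf (p v : 'rV[R]_4) : 'rV[R]_4 :=
  \row_(i < 4)
    match val i with
    | 0 => x 1 v
    | 1 => sigma * (x 2 v - x 1 v + A * (B * x 0 v * cos (B * x 0 p)))
    | 2 => - (x 1 v * x 3 p + x 1 p * x 3 v) + r * x 1 v - x 2 v
    | _ => x 1 v * x 2 p + x 1 p * x 2 v - x 3 v
    end.

Let scaleRE (a b : R) : a *: b = a * b. Proof. by []. Qed.

(* Each component is first rewritten as a combination of coordinate maps, so
   that instance resolution can compute its differential. *)
Lemma is_diff_vf (p : 'rV[R]_4) : is_diff p (vf sigma r A B) (dvf p).
Proof.
apply: is_diff_row => -[[|[|[|[|i]]]] i4] //.
- have -> : (fun u => vf sigma r A B u ord0 (Ordinal i4)) = x 1.
    by apply/funext => u; rewrite mxE.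
  eapply is_diff_eq; first typeclasses eauto.
  by apply/funext => v; rewrite mxE.
- have -> : (fun u => vf sigma r A B u ord0 (Ordinal i4)) =
            sigma *: (x 2 - x 1 + A *: (sin \o (B *: x 0))).
    by apply/funext => u; rewrite mxE.
  eapply is_diff_eq; first typeclasses eauto.
  by apply/funext => v; rewrite mxE /= !fctE /= !scaleRE; ring.
- have -> : (fun u => vf sigma r A B u ord0 (Ordinal i4)) =
            - (x 1 * x 3) + r *: x 1 - x 2.
    by apply/funext => u; rewrite mxE.
  eapply is_diff_eq; first typeclasses eauto.
  by apply/funext => v; rewrite mxE /= !fctE /= !scaleRE; ring.
- have -> : (fun u => vf sigma r A B u ord0 (Ordinal i4)) = x 1 * x 2 - x 3.
    by apply/funext => u; rewrite mxE.
  eapply is_diff_eq; first typeclasses eauto.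
  by apply/funext => v; rewrite mxE /= !fctE /= !scaleRE; ring.
Qed.

Hypothesis B_neq0 : B != 0.

Lemma vf_eqpt (k : int) : vf sigma r A B (eqpt B k) = 0.
Proof.
apply/rowP => j; rewrite !mxE /= !inordK //= [B * (_ / B)]mulrC divfK // sin_intpi.
by case: j => -[|[|[|[|i]]]] i4 /=; ring.
Qed.

Definition charpoly3 : {poly R} :=
  Poly [:: - (sigma * A * B); sigma * (1 - r - A * B); 1 + sigma; 1].

Lemma horner_charpoly3 l : charpoly3.[l] =
  l ^+ 3 + (1 + sigma) * l ^+ 2 + sigma * (1 - r - A * B) * l - sigma * A * B.
Proof. by rewrite horner_Poly /=; ring. Qed.

Lemma charpoly3_pos_root : 0 < sigma -> 0 < A -> 0 < B ->
  exists2 l, 0 < l & root charpoly3 l.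
Proof.
move=> sigma_gt0 A_gt0 B_gt0; apply: poly_pos_root.
  by rewrite /lead_coef (PolyK (c := 1)) ?oner_neq0.
by rewrite horner_charpoly3 !expr0n !mulr0 !add0r oppr_lt0 !mulr_gt0.
Qed.

Definition eqpt_eigenvector (l : R) : 'rV[R]_4 :=
  \row_(j < 4) [:: 1; l; r * l / (l + 1); 0]`_j.

Lemma eigenvector_jacobian_even_eqpt (k : int) (l : R) :
  (2 %| k)%Z -> 0 < l -> root charpoly3 l ->
  eqpt_eigenvector l *m jacobian (vf sigma r A B) (eqpt B k) = l *: eqpt_eigenvector l.
Proof.
move=> k_even l_gt0 /rootP chi_l.
rewrite /jacobian mul_rV_lin1 (@diff_val _ _ _ _ _ _ _ (is_diff_vf _)).
apply/rowP => j; rewrite !mxE /= !inordK //= [B * (_ / B)]mulrC divfK // cos_evenpi //.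
have l1_neq0 : l + 1 != 0 by rewrite gt_eqF // addr_gt0.
case: j => -[|[|[|[|i]]]] i4 //=.
- by rewrite mulr1.
- have -> : sigma * (r * l / (l + 1) - l + A * (B * 1 * 1)) =
            l * l - charpoly3.[l] / (l + 1) by rewrite horner_charpoly3; field.
  by rewrite chi_l mul0r subr0.
- by field.
- by rewrite mulr0; ring.
Qed.

End WalkingDroplet.

Theorem mainTheorem1 (R : realType) (sigma r A B : R) :
  0 < sigma -> 0 < A -> 0 < B ->
  forall k : int,
    vf sigma r A B (eqpt B k) = 0 /\
    ((2 %| k)%Z ->
      exists2 lam : R, 0 < lam &
        eigenvalue (jacobian (vf sigma r A B) (eqpt B k)) lam).
Proof.
move=> sigma_gt0 A_gt0 B_gt0 k; have B_neq0 : B != 0 := lt0r_neq0 B_gt0.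
split; first exact: vf_eqpt.
move=> k_even.
have [l l_gt0 chi_l] := charpoly3_pos_root sigma r A B sigma_gt0 A_gt0 B_gt0.
exists l => //; apply/eigenvalueP; exists (eqpt_eigenvector r l).
  exact: eigenvector_jacobian_even_eqpt.
by apply/eqP => /rowP/(_ ord0); rewrite !mxE; apply/eqP; exact: oner_neq0.
Qed.
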